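(* For every $\epsilon\in(0,1)$ there exist a constant $M>0$ and an infinite strictly increasing sequence of positive integers $n_1<n_2<\cdots$ such that for all $j$, $$R_3(n_j)\ge M\exp\!\left(\frac{\log(2-\epsilon)\,\log n_j}{\log\log n_j}\right).$$
   Context: For a positive integer $n$, $R_3(n)$ denotes the number of ordered triples $(x,y,z)$ of positive integers with $n = xyz + x + y + z$. *)

From Stdlib Require Import Reals Arith List.
Import ListNotations.

Definition is_sol (n x y z : nat) : bool := Nat.eqb (x*y*z + x + y + z) n.

(* R_3(n): number of ordered triples (x,y,z) of positive integers with
   n = xyz + x + y + z.  Any such triple has x,y,z <= n, so it suffices
   to range over 1..n in each coordinate. *)
Definition R3 (n : nat) : nat :=
  length (filter (fun t : nat * nat * nat =>
                    let '(x, y, z) := t in is_sol n x y z)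
    (list_prod (list_prod (seq 1 n) (seq 1 n)) (seq 1 n))).

(** Let [n] be the product of the [k] primes up to [2m]. Every divisor [d] of [n] with
    [1 < d < n] gives the solution [(1, d - 1, n/d - 1)], because [yz + y + z + 1 = (y+1)(z+1)];
    as [n] is squarefree this yields [R_3(n) >= 2^k - 2]. By Legendre's formula every prime power
    dividing [C(2m, m)] is at most [2m], so [2^m <= C(2m, m) <= (2m)^k], while [2^k <= n <= (2m)^k].
    Since [t / log t] is increasing, [log n / log log n <= k log 2m / log (k log 2m)], and
    [k log 2m >= m log 2], so [log n / log log n <= k (1 + o(1))]. Hence [2^k] eventually exceeds
    [(2 - eps)^(log n / log log n)]. *)

From Stdlib Require Import Reals Lra Lia Psatz ClassicalEpsilon.
From mathcomp Require ssreflect ssrfun ssrbool eqtype ssrnat seq div prime bigop binomial.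
From mathcomp Require zify.

Module Primorial.
Import ssreflect ssrfun ssrbool eqtype ssrnat seq div prime bigop binomial zify.
Set Implicit Arguments.
Unset Strict Implicit.

Lemma expn2_leq_bin_double m : 2 ^ m <= 'C(m.*2, m).
Proof.
elim: m => [|m IHm] //.
have bin_mid : 'C(m.*2.+1, m.+1) = 'C(m.*2.+1, m).
  by rewrite -bin_sub; [congr 'C(_, _); lia | lia].
rewrite doubleS binS bin_mid expnS.
have := leq_bin2l m (leqnSn m.*2); lia.
Qed.

Lemma leq_divD_carry m n q : 0 < q -> (m + n) %/ q <= m %/ q + n %/ q + (q <= m + n).
Proof.
move=> q_gt0; rewrite divnD // leq_add2l.
have [/leq_trans le_q|] //= := leqP q (m %% q + n %% q).
by rewrite le_q // leq_add ?leq_mod.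
Qed.

Lemma logn_fact_wide p n N : prime p -> n <= N ->
  logn p n`! = \sum_(1 <= k < N.+1) n %/ p ^ k.
Proof.
move=> p_pr nN; rewrite logn_fact // [RHS](@big_cat_nat _ _ _ n.+1) //=.
rewrite [X in _ = _ + X]big1_seq ?addn0 // => k /andP[_].
rewrite mem_index_iota => /andP[nk _].
exact/divn_small/(leq_trans nk)/ltnW/ltn_expl/prime_gt1.
Qed.

Lemma sum_indicator_leq e N : \sum_(1 <= k < N.+1) (k <= e) = minn N e.
Proof.
elim: N => [|N IHN]; first by rewrite big_geq // min0n.
by rewrite big_nat_recr //= IHN; case: (leqP N.+1 e) => /=; lia.
Qed.

Lemma logn_bin p n m : prime p -> m <= n -> logn p 'C(n, m) <= trunc_log p n.
Proof.
move=> p_pr mn; set e := trunc_log p n.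
have legendre : logn p n`! = logn p 'C(n, m) + (logn p m`! + logn p (n - m)`!).
  by rewrite -(bin_fact mn) !lognM ?muln_gt0 ?fact_gt0 ?bin_gt0.
rewrite !(@logn_fact_wide p _ n) ?leq_subr // in legendre.
have digits : \sum_(1 <= k < n.+1) n %/ p ^ k <=
    \sum_(1 <= k < n.+1) (m %/ p ^ k + (n - m) %/ p ^ k + (p ^ k <= n)).
  apply: leq_sum => k _; rewrite -{1 3}(subnKC mn).
  by apply: leq_divD_carry; rewrite expn_gt0 prime_gt0.
(* Each [k] contributes at most one carry, and none once [p ^ k > n]. *)
have carries : \sum_(1 <= k < n.+1) (p ^ k <= n) <= \sum_(1 <= k < n.+1) (k <= e).
  apply: leq_sum => k _; case: (leqP (p ^ k) n) => //= pk.
  by rewrite (trunc_log_max (prime_gt1 p_pr) pk).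
rewrite !big_split /= sum_indicator_leq in digits carries.
have := geq_minr n e; lia.
Qed.

Lemma prod_nat_const_seq (I : Type) (r : seq I) c : \prod_(i <- r) c = c ^ size r.
Proof. by rewrite big_const_seq count_predT iter_muln muln1. Qed.

Definition primes_upto x := [seq p <- iota 0 x.+1 | prime p].

Definition primorial x := \prod_(p <- primes_upto x) p.

Lemma mem_primes_upto x p : (p \in primes_upto x) = prime p && (p <= x).
Proof. by rewrite mem_filter mem_iota ltnS. Qed.

Lemma pfactor_logn_bin_leq p n m : prime p -> 0 < n -> m <= n ->
  p ^ logn p 'C(n, m) <= n.
Proof.
move=> p_pr n_gt0 mn; apply: leq_trans (trunc_logP (prime_gt1 p_pr) n_gt0).
by rewrite leq_pexp2l ?prime_gt0 ?logn_bin.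
Qed.

Lemma bin_leq_expn_primes_upto n m : 0 < n -> m <= n ->
  'C(n, m) <= n ^ size (primes_upto n).
Proof.
move=> n_gt0 mn; have C_gt0 : 0 < 'C(n, m) by rewrite bin_gt0.
rewrite {1}(prod_prime_decomp C_gt0) prime_decompE big_map /=.
apply: (@leq_trans (\prod_(p <- primes 'C(n, m)) n)).
  rewrite big_seq [X in _ <= X]big_seq; apply: leq_prod => p.
  rewrite mem_primes => /and3P[p_pr _ _].
  exact: pfactor_logn_bin_leq.
rewrite prod_nat_const_seq leq_pexp2l //.
apply: uniq_leq_size (primes_uniq _) _ => p p_C.
have p_pr : prime p by move: p_C; rewrite mem_primes => /andP[].
rewrite mem_primes_upto p_pr /=; apply: leq_trans (pfactor_logn_bin_leq p_pr n_gt0 mn).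
by rewrite -{1}(expn1 p) leq_pexp2l ?logn_gt0 // prime_gt0.
Qed.

Lemma expn2_leq_expn_primes_upto m : 0 < m ->
  2 ^ m <= m.*2 ^ size (primes_upto m.*2).
Proof.
move=> m_gt0; apply: leq_trans (expn2_leq_bin_double m) _.
by apply: bin_leq_expn_primes_upto; rewrite -addnn; lia.
Qed.

Lemma primorial_leq x : primorial x <= x ^ size (primes_upto x).
Proof.
rewrite -prod_nat_const_seq /primorial big_seq [X in _ <= X]big_seq.
by apply: leq_prod => p; rewrite mem_primes_upto => /andP[].
Qed.

Lemma expn2_leq_primorial x : 2 ^ size (primes_upto x) <= primorial x.
Proof.
rewrite -prod_nat_const_seq /primorial big_seq [X in _ <= X]big_seq.
by apply: leq_prod => p; rewrite mem_primes_upto => /andP[/prime_gt1].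
Qed.

Lemma size_divisors_mul_prime p n : prime p -> ~~ (p %| n) -> 0 < n ->
  (size (divisors n)).*2 <= size (divisors (p * n)).
Proof.
move=> p_pr p_n n_gt0.
have pn_gt0 : 0 < p * n by rewrite muln_gt0 prime_gt0.
have uniq_pD : uniq (map (muln p) (divisors n)).
  by rewrite map_inj_uniq ?divisors_uniq // => a b /eqP; rewrite eqn_pmul2l ?prime_gt0 // => /eqP.
have disjoint : ~~ has (mem (divisors n)) (map (muln p) (divisors n)).
  apply/hasPn => _ /mapP[d _ ->]; rewrite /= -dvdn_divisors //.
  by apply: contra p_n; apply: dvdn_trans (dvdn_mulr _ (dvdnn p)).
rewrite -addnn -{2}(size_map (muln p) (divisors n)) -size_cat uniq_leq_size //.
  by rewrite cat_uniq divisors_uniq disjoint.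
move=> x; rewrite mem_cat -!dvdn_divisors // => /orP[x_n | /mapP[d d_n ->]].
  exact: dvdn_mull.
by rewrite dvdn_pmul2l ?prime_gt0 // dvdn_divisors.
Qed.

Lemma expn2_leq_size_divisors (S : seq nat) : uniq S -> all prime S ->
  2 ^ size S <= size (divisors (\prod_(p <- S) p)).
Proof.
elim: S => [|p S IHS] /=; first by rewrite big_nil.
move=> /andP[p_S uniq_S] /andP[p_pr prime_S].
have prod_gt0 : 0 < \prod_(q <- S) q.
  by rewrite big_seq prodn_cond_gt0 // => q /(allP prime_S)/prime_gt0.
have p_prod : ~~ (p %| \prod_(q <- S) q).
  rewrite Euclid_dvd_prod // big_has; apply/hasPn => q q_S /=.
  by rewrite dvdn_prime2 ?(allP prime_S q q_S) //; apply: contraNneq _ p_S => ->.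
rewrite big_cons expnS mul2n.
apply: leq_trans _ (size_divisors_mul_prime p_pr p_prod prod_gt0).
by rewrite leq_double IHS.
Qed.

Lemma InP (T : eqType) (x : T) (s : seq T) : reflect (List.In x s) (x \in s).
Proof.
elim: s => [|y s IHs] /=; first by constructor.
rewrite in_cons eq_sym; apply: (iffP orP) => [[/eqP|/IHs]|[|/IHs]]; auto.
by move=> ->; rewrite eqxx; left.
Qed.

Lemma uniq_NoDup (T : eqType) (s : seq T) : uniq s -> List.NoDup s.
Proof.
elim: s => [|x s IHs] /=; first by constructor.
by move=> /andP[/InP x_s /IHs]; constructor.
Qed.

Lemma size_length (T : Type) (s : seq T) : size s = List.length s.
Proof. by elim: s => //= x s ->. Qed.

Lemma size_uniq_solutions_leq_R3 n (l : seq (nat * nat * nat)) : uniq l ->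
  (forall x y z, (x, y, z) \in l -> [&& 0 < x, 0 < y, 0 < z & is_sol n x y z]) ->
  size l <= R3 n.
Proof.
move=> l_uniq l_sol; rewrite size_length /R3; apply/leP.
apply: List.NoDup_incl_length; first exact: uniq_NoDup.
move=> [[x y z]] /InP /l_sol /and4P[x_gt0 y_gt0 z_gt0 sol].
apply/List.filter_In; split=> //.
move/PeanoNat.Nat.eqb_eq: sol => sol.
apply/List.in_prod_iff; split; last by apply/List.in_seq; lia.
by apply/List.in_prod_iff; split; apply/List.in_seq; lia.
Qed.

Lemma inner_divisors_leq_R3 n : size [seq d <- divisors n | 1 < d < n] <= R3 n.
Proof.
set tri := fun d => (1, d.-1, (n %/ d).-1).
rewrite -(size_map tri); apply: size_uniq_solutions_leq_R3.
  rewrite map_inj_in_uniq ?filter_uniq ?divisors_uniq // => a b.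
  by rewrite !mem_filter => /andP[a_gt1 _] /andP[b_gt1 _] [ab _]; lia.
move=> x y z /mapP[d]; rewrite mem_filter => /andP[/andP[d_gt1 d_lt_n] d_n] [-> -> ->].
have n_gt0 : 0 < n by lia.
rewrite -dvdn_divisors // in d_n; have n_eq := divnK d_n.
have e_gt1 : 1 < n %/ d by rewrite ltn_divRL // mul1n.
rewrite /is_sol !ltn_predRL d_gt1 e_gt1 /=; apply/PeanoNat.Nat.eqb_eq; rewrite -[in RHS]n_eq.
case: (n %/ d) e_gt1 => [|e] // _; case: d d_gt1 {d_lt_n d_n n_eq} => [|d] // _.
rewrite /=; nia.
Qed.

Lemma size_divisors_leq_R3 n : 0 < n -> size (divisors n) <= R3 n + 2.
Proof.
move=> n_gt0; rewrite -(count_predC (fun d => 1 < d < n)) -!size_filter.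
apply: leq_add (inner_divisors_leq_R3 n) _.
apply: (@leq_trans (size [:: 1; n])) => //.
apply: uniq_leq_size; first by rewrite filter_uniq ?divisors_uniq.
move=> d; rewrite mem_filter /= -dvdn_divisors // => /andP[d_inner d_n].
have := dvdn_leq n_gt0 d_n; have := dvdn_gt0 n_gt0 d_n.
by rewrite !inE; lia.
Qed.

Lemma expn_pow a b : a ^ b = Nat.pow a b.
Proof. by elim: b => //= b IHb; rewrite expnS IHb. Qed.

(* Stated with the Peano operations, for use outside the ssreflect scopes. *)
Lemma primorial_counts m : (0 < m)%coq_nat -> exists k n : nat,
  [/\ (Nat.pow 2 m <= Nat.pow (Nat.mul 2 m) k)%coq_nat,
      (n <= Nat.pow (Nat.mul 2 m) k)%coq_nat,
      (Nat.pow 2 k <= n)%coq_nat &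
      (Nat.pow 2 k <= Nat.add (R3 n) 2)%coq_nat].
Proof.
move=> /ltP m_gt0; set S := primes_upto m.*2.
exists (size S), (primorial m.*2); rewrite -!expn_pow multE plusE mul2n.
have S_prime : all prime S by apply: filter_all.
have S_uniq : uniq S by rewrite filter_uniq ?iota_uniq.
split; apply/leP.
- exact: expn2_leq_expn_primes_upto.
- exact: primorial_leq.
- exact: expn2_leq_primorial.
apply: leq_trans (expn2_leq_size_divisors S_uniq S_prime) _.
by apply: size_divisors_leq_R3; apply: leq_trans (expn2_leq_primorial _); rewrite expn_gt0.
Qed.
End Primorial.

Open Scope R_scope.

Lemma ln_le x y : 0 < x -> x <= y -> ln x <= ln y.
Proof.
intros Hx [Hxy | <-]; [now left; apply ln_increasing | apply Rle_refl].
Qed.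

Lemma exp_le x y : x <= y -> exp x <= exp y.
Proof. intros [Hxy | <-]; [now left; apply exp_increasing | apply Rle_refl]. Qed.

Lemma ln_pow_le_INR (a b c d : nat) : (0 < a)%nat -> (0 < c)%nat ->
  (Nat.pow a b <= Nat.pow c d)%nat -> INR b * ln (INR a) <= INR d * ln (INR c).
Proof.
intros Ha Hc Hle.
assert (Ha' : 0 < INR a) by (apply lt_0_INR; lia).
assert (Hc' : 0 < INR c) by (apply lt_0_INR; lia).
apply le_INR in Hle; rewrite !pow_INR in Hle.
rewrite <- !ln_pow by assumption.
apply ln_le; [apply pow_lt |]; assumption.
Qed.

Lemma ln2_bounds : 0 < ln 2 < 1.
Proof.
split; [rewrite <- ln_1 | rewrite <- (ln_exp 1)]; apply ln_increasing; try lra.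
pose proof (exp_ineq1 1); lra.
Qed.

Lemma div_ln_le s t : exp 1 <= s -> s <= t -> s / ln s <= t / ln t.
Proof.
intros Hs Hst.
assert (Hs0 : 0 < s) by (pose proof (exp_pos 1); lra).
assert (Hlns : 1 <= ln s) by (rewrite <- (ln_exp 1); now apply ln_le; [apply exp_pos |]).
assert (Hlnt : ln s <= ln t) by now apply ln_le.
assert (Hquot : ln t - ln s <= t / s - 1).
{ replace (ln t - ln s) with (ln (t / s))
    by (unfold Rdiv; rewrite ln_mult, ln_Rinv; try apply Rinv_0_lt_compat; lra).
  pose proof (exp_ineq1_le (ln (t / s))) as H.
  rewrite exp_ln in H; [lra | apply Rdiv_lt_0_compat; lra]. }
assert (Hcross : s * ln t <= t * ln s).
{ assert (s * (ln t - ln s) <= t - s).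
  { replace (t - s) with (s * (t / s - 1)) by (field; lra).
    apply Rmult_le_compat_l; lra. }
  nra. }
apply (Rmult_le_reg_r (ln s * ln t)); [nra |].
field_simplify; nra.
Qed.

Lemma div_ln_le_of_bounds c x t y B : 0 < c -> exp 1 <= x <= t -> 0 < y <= ln t ->
  c * t <= B * y -> c * x / ln x <= B.
Proof.
intros Hc [Hx Hxt] [Hy Hyt] HB.
assert (Ht : 0 < t) by (pose proof (exp_pos 1); lra).
assert (Hmono := div_ln_le x t Hx Hxt).
apply (Rle_trans _ (c * (t / ln t))).
{ unfold Rdiv in *; rewrite Rmult_assoc; apply Rmult_le_compat_l; lra. }
apply (Rle_trans _ (c * t / y)).
{ unfold Rdiv; rewrite <- Rmult_assoc; apply Rmult_le_compat_l; [nra |].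
  apply Rinv_le_contravar; lra. }
apply (Rmult_le_reg_r y); [lra |]. field_simplify; lra.
Qed.

Lemma sqr_le_4exp x : 0 <= x -> x * x <= 4 * exp x.
Proof.
intros Hx.
replace (exp x) with (exp (x / 2) * exp (x / 2)) by (rewrite <- exp_plus; f_equal; field).
pose proof (exp_ineq1_le (x / 2)); nra.
Qed.

Lemma exponent_bound_eventually c K : 0 < c < ln 2 -> 0 <= K ->
  exists B, forall m k, 0 < m -> B <= ln (2 * m) -> m * ln 2 <= k * ln (2 * m) ->
    K <= k /\ 3 <= k * ln 2 /\ 0 < ln (m * ln 2) /\
    c * (k * ln (2 * m)) <= (k - 1) * ln 2 * ln (m * ln 2).
Proof.
intros Hc HK.
pose proof ln2_bounds as Hln2.
set (a := ln 2 - ln (ln 2)).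
assert (Ha : 0 < a).
{ assert (ln (ln 2) < 0) by (rewrite <- ln_1; apply ln_increasing; lra). unfold a; lra. }
set (r := c / ln 2); set (th := (1 + r) / 2).
assert (Hr : 0 < r < 1).
{ unfold r; split; [apply Rdiv_lt_0_compat |
    apply (Rmult_lt_reg_r (ln 2)); [| unfold Rdiv; rewrite Rmult_assoc, Rinv_l]]; lra. }
assert (Hth : r < th < 1) by (unfold th; lra).
assert (H3 : 0 < 3 / ln 2) by (apply Rdiv_lt_0_compat; lra).
assert (Hth' : 0 < 1 / (1 - th)) by (apply Rdiv_lt_0_compat; lra).
(* Since [ln (m ln 2) = L - a] and [r < th < 1], the goal splits into [r L <= th (L - a)]
   and [th k <= k - 1], which hold for large [L] and large [k] respectively. *)
set (K' := K + 3 / ln 2 + 1 / (1 - th)).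
exists (8 * K' / ln 2 + th * a / (th - r)).
intros m k Hm HB Hmk; set (L := ln (2 * m)) in *.
assert (HL1 : 8 * K' / ln 2 > 0) by (apply Rdiv_lt_0_compat; unfold K'; lra).
assert (HL2 : 0 < th * a / (th - r)) by (apply Rdiv_lt_0_compat; nra).
(* exp L = 2 m grows faster than L^2, so k >= L ln 2 / 8. *)
assert (Hk : K' <= k).
{ assert (Hsq : L * L <= 8 * m).
  { replace (8 * m) with (4 * exp L) by (unfold L; rewrite exp_ln; lra).
    apply sqr_le_4exp; lra. }
  assert (HKL : 8 * K' <= L * ln 2).
  { apply (Rmult_le_reg_r (/ ln 2)); [apply Rinv_0_lt_compat; lra |].
    replace (L * ln 2 * / ln 2) with L by (field; lra). unfold Rdiv in HL1; lra. }
  nra. }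
assert (Hk3 : 3 <= k * ln 2).
{ assert (3 / ln 2 * ln 2 = 3) by (field; lra).
  assert (3 / ln 2 <= k) by (unfold K' in Hk; lra). nra. }
assert (Hthk : th * k <= k - 1).
{ assert (1 / (1 - th) * (1 - th) = 1) by (field; lra). unfold K' in Hk; nra. }
assert (HaL : a < L).
{ assert (a <= th * a / (th - r)).
  { apply (Rmult_le_reg_r (th - r)); [lra |]. field_simplify; nra. }
  lra. }
assert (HrL : r * L <= th * (L - a)).
{ assert (th * a <= (th - r) * L).
  { apply (Rmult_le_reg_r (/ (th - r))); [apply Rinv_0_lt_compat; lra |].
    replace ((th - r) * L * / (th - r)) with L by (field; lra). lra. }
  lra. }
replace (ln (m * ln 2)) with (L - a) by (unfold L, a; rewrite !ln_mult; lra).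
split; [unfold K' in Hk; lra | split; [exact Hk3 | split; [lra |]]].
replace c with (r * ln 2) by (unfold r; field; lra).
assert (r * (k * L) <= (k - 1) * (L - a)).
{ apply (Rle_trans _ (th * k * (L - a))); [| apply Rmult_le_compat_r; lra].
  assert (0 <= k) by (unfold K' in Hk; lra). nra. }
nra.
Qed.

Lemma primorial_log_counts m : (0 < m)%nat -> exists k n : nat,
  INR m * ln 2 <= INR k * ln (2 * INR m) /\
  ln (INR n) <= INR k * ln (2 * INR m) /\
  INR k * ln 2 <= ln (INR n) /\
  (k < n)%nat /\
  2 ^ k - 2 <= INR (R3 n).
Proof.
intros Hm.
destruct (Primorial.primorial_counts Hm) as [k [n [Hmk Hnk Hkn HR3]]].
assert (Hn : (0 < n)%nat) by (pose proof (Nat.pow_nonzero 2 k); lia).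
assert (H2m : INR (2 * m) = 2 * INR m) by (rewrite mult_INR; reflexivity).
assert (I2 : INR 2 = 2) by (simpl; ring).
exists k, n; repeat split.
- rewrite <- H2m, <- I2; now apply ln_pow_le_INR; [lia | lia |].
- rewrite <- H2m, <- (Rmult_1_l (ln (INR n))).
  now apply (ln_pow_le_INR n 1); [| lia | rewrite Nat.pow_1_r].
- rewrite <- I2, <- (Rmult_1_l (ln (INR n))).
  now apply (ln_pow_le_INR 2 k n 1); [lia | | rewrite Nat.pow_1_r].
- pose proof (Nat.pow_gt_lin_r 2 k ltac:(lia)); lia.
- apply le_INR in HR3; rewrite plus_INR, pow_INR, I2 in HR3; lra.
Qed.

Lemma exp_pred_mul_ln2_le k : (2 <= k)%nat -> exp ((INR k - 1) * ln 2) <= 2 ^ k - 2.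
Proof.
intros Hk.
replace ((INR k - 1) * ln 2) with (INR k * ln 2 + - ln 2) by ring.
rewrite exp_plus, exp_Ropp, exp_ln by lra.
replace (exp (INR k * ln 2)) with (2 ^ k) by (rewrite <- Rpower_pow by lra; reflexivity).
assert (4 <= 2 ^ k) by (replace 4 with (2 ^ 2) by ring; apply Rle_pow; [lra | lia]).
lra.
Qed.

Lemma R3_large_beyond eps : 0 < eps < 1 -> forall N : nat, exists n : nat,
  (N < n)%nat /\ (3 <= n)%nat /\
  exp (ln (2 - eps) * ln (INR n) / ln (ln (INR n))) <= INR (R3 n).
Proof.
intros Heps N; set (c := ln (2 - eps)); pose proof ln2_bounds as Hln2.
assert (Hc : 0 < c < ln 2).
{ unfold c; split; [rewrite <- ln_1 |]; apply ln_increasing; lra. }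
destruct (exponent_bound_eventually c (INR N) Hc (pos_INR N)) as [B HB].
destruct (INR_unbounded (exp B)) as [m Hm].
assert (HmR : 0 < INR m) by (pose proof (exp_pos B); lra).
assert (Hm0 : (0 < m)%nat) by (apply INR_lt; simpl; lra).
destruct (primorial_log_counts m Hm0) as [k [n [Hmk [Hnk [Hkn [Hkn_lt HR3]]]]]].
assert (HL : B <= ln (2 * INR m)).
{ rewrite <- (ln_exp B); apply ln_le; [apply exp_pos | lra]. }
destruct (HB (INR m) (INR k) HmR HL Hmk) as [HNk [Hk3 [Hy Hexp]]].
assert (Hk2 : (2 < k)%nat) by (apply INR_lt; simpl; nra).
assert (HNk' : (N <= k)%nat) by (apply INR_le; exact HNk).
exists n; split; [lia | split; [lia |]].
assert (Hx : exp 1 <= ln (INR n) <= INR k * ln (2 * INR m))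
  by (pose proof exp_le_3; lra).
assert (Hy' : ln (INR m * ln 2) <= ln (INR k * ln (2 * INR m))) by (apply ln_le; nra).
apply (Rle_trans _ (exp ((INR k - 1) * ln 2))).
- apply exp_le, (div_ln_le_of_bounds _ _ _ _ _ (proj1 Hc) Hx (conj Hy Hy') Hexp).
- apply (Rle_trans _ _ _ (exp_pred_mul_ln2_le k ltac:(lia))); exact HR3.
Qed.

Lemma increasing_seq_of_unbounded (P : nat -> Prop) :
  (forall N, exists n, (N < n)%nat /\ P n) ->
  exists f : nat -> nat, (forall j, P (f j)) /\ (forall j, (f j < f (S j))%nat).
Proof.
intros HP; destruct (choice _ HP) as [next Hnext].
exists (fun j => Nat.iter (S j) next 0%nat); split; intros j; apply Hnext.
Qed.

Theorem mainTheorem9 :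
  forall eps : R, 0 < eps < 1 ->
  exists M : R, 0 < M /\
  exists nseq : nat -> nat,
    (forall j, (3 <= nseq j)%nat) /\
    (forall j, (nseq j < nseq (S j))%nat) /\
    (forall j,
       INR (R3 (nseq j)) >=
       M * exp (ln (2 - eps) * ln (INR (nseq j)) / ln (ln (INR (nseq j))))).
Proof.
intros eps Heps.
destruct (increasing_seq_of_unbounded _ (R3_large_beyond eps Heps)) as [f [Hf Hmono]].
exists 1; split; [lra |].
exists f; split; [| split]; [apply Hf | exact Hmono |].
intros j; rewrite Rmult_1_l; apply Rle_ge, Hf.
Qed.
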